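(* Let $t$ be a positive integer and let $G$ be a finite group (not necessarily abelian, written additively) such that the smallest prime divisor $p$ of $|G|$ satisfies $p>t(2t+1)$. Let $M=[a_1^{\lambda_1},a_2^{\lambda_2}]$ be a multiset of non-identity elements of $G$ with $\lambda_1\ge 2t$. Then there exists a realization $W=(w_0,\dots,w_{\lambda_1+\lambda_2})$ of $M$ such that (a) $w_i=w_{i-1}+a_1$ for all $i\in\{1,\dots,t\}$; (b) $w_i=w_{i-1}+a_1$ for all $i\in\{\lambda_1+\lambda_2-(t-1),\dots,\lambda_1+\lambda_2\}$; (c) $w_i\ne w_j$ whenever $1\le|i-j|\le t$.
   Context: $[a_1^{\lambda_1},a_2^{\lambda_2}]$ denotes the multiset containing $a_1$ with multiplicity $\lambda_1$ and $a_2$ with multiplicity $\lambda_2$. For a multiset $M$, $\pm M$ denotes the multiset $[x,-x : x\in M]$ (each element of $M$ contributes both $x$ and $-x$, with multiplicity). A walk $W=(w_0,\dots,w_\ell)$ in $G$ has differences $\delta_i$ defined by $w_i=w_{i-1}+\delta_i$ ($1\le i\le\ell$), and $\Delta(W)=\pm[\delta_1,\dots,\delta_\ell]$. A realization of $M$ is a walk $W$ (in the Cayley graph $Cay[G:\pm M]$, vertices may repeat) with $\Delta(W)=\pm M$; equivalently, there is an ordering $(x_1,\dots,x_\ell)$ of $M$ and signs $\varepsilon_i\in\{\pm1\}$ with $w_i=w_{i-1}+\varepsilon_i x_i$. *)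

From mathcomp Require Import all_boot all_order all_fingroup.
Set Implicit Arguments. Unset Strict Implicit. Unset Printing Implicit Defensive.
Import GroupScope.
Local Open Scope group_scope.

(* The paper writes G additively; here G is a finGroupType written
   multiplicatively, so "w_i = w_{i-1} + d" becomes "w i = w i.-1 * d" and
   "-x" becomes "x^-1". *)

Definition mset2 (gT : finGroupType) (a1 a2 : gT) (l1 l2 : nat) : seq gT :=
  nseq l1 a1 ++ nseq l2 a2.

Definition realization (gT : finGroupType) (M : seq gT) (w : nat -> gT) : Prop :=
  exists (x : seq gT) (eps : nat -> bool),
    perm_eq x M /\
    forall i, 0 < i <= size M ->
      w i = w i.-1 * (if eps i then nth 1 x i.-1 else (nth 1 x i.-1)^-1).

(* The walk takes t steps a1, then all l2 steps a2 with one common sign,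
   i.e. steps b = a2 or b = a2^-1, then the remaining l1 - t steps a1;
   l1 >= 2t keeps the last t steps equal to a1.  Any at most t consecutive
   steps multiply to a1^u1 b^v a1^u2, conjugate to b^v a1^(u1 + u2), so distinct
   vertices at distance at most t need only b^v a1^u <> 1 for
   0 < u + v <= t.  Such a short relation cannot hold for both signs of b:
   two of them combine into a1^k = 1 with 0 < k <= t^2, impossible since
   every nontrivial element has order at least p > t^2 (the hypothesis
   p > t(2t+1) is only used through this weaker bound). *)

From mathcomp Require Import all_boot all_order all_fingroup.
From mathcomp Require Import cyclic zify.
From Stdlib Require Import Classical.

Set Implicit Arguments.
Unset Strict Implicit.
Unset Printing Implicit Defensive.

Import GroupScope.
Local Open Scope group_scope.

Section Relations.
Variable gT : finGroupType.
Implicit Types (a b c x : gT) (G : {group gT}).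

Lemma expg_neq1_lt_pdiv G x k :
  x \in G -> x != 1 -> (0 < k < pdiv #|G|)%N -> x ^+ k != 1.
Proof.
move=> xG x_neq1 /andP[k_gt0 k_lt_p]; apply: contraTneq k_lt_p => xk1.
have ox_gt1 : (1 < #[x])%N by rewrite order_gt1.
have ox_k : (#[x] <= k)%N by apply: dvdn_leq k_gt0 _; rewrite order_dvdn xk1.
by rewrite -leqNgt (leq_trans (pdiv_min_dvd ox_gt1 (order_dvdG xG)) ox_k).
Qed.

Lemma mulg_eq1C x y : x * y = 1 -> y * x = 1.
Proof. by move/eqP; rewrite -eq_invg_mul => /eqP <-; rewrite mulVg. Qed.

Lemma expg_relations_combine a c u v u' v' :
  c ^+ v * a ^+ u = 1 -> c^-1 ^+ v' * a ^+ u' = 1 -> a ^+ (u * v' + u' * v) = 1.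
Proof.
move=> /eqP; rewrite -eq_invg_mul => /eqP cv.
move=> /eqP; rewrite -eq_invg_mul expVgn invgK => /eqP cv'.
by rewrite expgD !expgnA -cv -cv' -expVgn -!expgnA mulnC expVgn mulVg.
Qed.

Definition short_relation_free a b t :=
  forall u v, (0 < u + v <= t)%N -> b ^+ v * a ^+ u != 1.

Lemma exists_sign_short_relation_free a c t :
  (forall k, (0 < k <= t * t)%N -> a ^+ k != 1) ->
  (forall k, (0 < k <= t)%N -> c ^+ k != 1) ->
  exists2 b, b = c \/ b = c^-1 & short_relation_free a b t.
Proof.
move=> a_free c_free.
have mixed_free b : (forall k, (0 < k <= t)%N -> b ^+ k != 1) ->
    (forall u v, (0 < u)%N -> (0 < v)%N -> (u + v <= t)%N -> b ^+ v * a ^+ u != 1) ->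
    short_relation_free a b t.
  move=> b_free bv_free u v /andP[uv_gt0 uv_le_t].
  case: (posnP u) => [u0|u_gt0]; first by rewrite u0 expg0 mulg1 b_free //; lia.
  case: (posnP v) => [v0|v_gt0]; last exact: bv_free.
  by rewrite v0 expg0 mul1g a_free //; nia.
have cV_free k : (0 < k <= t)%N -> c^-1 ^+ k != 1.
  by move=> k_small; rewrite expVgn invg_eq1 c_free.
case: (classic (exists u v, [/\ (0 < u)%N, (0 < v)%N, (u + v <= t)%N & c ^+ v * a ^+ u = 1])).
- case=> u [v [u_gt0 v_gt0 uv_le_t rel]].
  exists c^-1; first by right.
  apply: mixed_free => // u' v' u'_gt0 v'_gt0 u'v'_le_t.
  have k_small : (0 < u * v' + u' * v <= t * t)%N by nia.
  by apply: contra_neq (a_free _ k_small); apply: expg_relations_combine.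
- move=> no_rel; exists c; first by left.
  apply: mixed_free => // u v u_gt0 v_gt0 uv_le_t; apply/eqP => rel.
  by apply: no_rel; exists u, v.
Qed.

End Relations.

Lemma realization_of_steps (gT : finGroupType) (M x : seq gT) (w : nat -> gT) :
  perm_eq x M ->
  (forall i, (0 < i <= size M)%N ->
     w i = w i.-1 * nth 1 x i.-1 \/ w i = w i.-1 * (nth 1 x i.-1)^-1) ->
  realization M w.
Proof.
move=> xM steps; exists x, (fun i => w i == w i.-1 * nth 1 x i.-1); split=> // i iM.
by case: eqP => // ne; case: (steps i iM) => // /ne.
Qed.

Section BlockWalk.
Variables (gT : finGroupType) (a b : gT).

Lemma expg_blocks_split p q r dp dq dr :
  (0 < dp -> q = 0 /\ r = 0)%N -> (0 < dq -> r = 0)%N ->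
  a ^+ (p + dp) * b ^+ (q + dq) * a ^+ (r + dr) =
    a ^+ p * b ^+ q * a ^+ r * (a ^+ dp * b ^+ dq * a ^+ dr).
Proof.
case: dp => [_|dp /(_ isT)[-> ->] _]; last by rewrite !expg0 !mulg1 expgD !mulgA.
case: dq => [_|dq /(_ isT) ->]; last by rewrite addn0 !expg0 !mulg1 mul1g expgD !mulgA.
by rewrite !addn0 !expg0 !mul1g expgD !mulgA.
Qed.

Variables (t l : nat).

Definition block_walk i := a ^+ minn i t * b ^+ minn (i - t) l * a ^+ (i - t - l).

Definition block_step i := if (t < i <= t + l)%N then b else a.

Definition block_seq m := nseq t a ++ nseq l b ++ nseq m a.

Lemma block_walk_split i j : (i <= j)%N ->
  block_walk j = block_walk i *
    (a ^+ (minn j t - minn i t) * b ^+ (minn (j - t) l - minn (i - t) l) *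
     a ^+ (j - t - l - (i - t - l))).
Proof.
move=> le_ij; rewrite /block_walk -expg_blocks_split; try lia.
by congr (_ ^+ _ * _ ^+ _ * _ ^+ _); lia.
Qed.

Lemma block_walk_step i : (0 < i)%N -> block_walk i = block_walk i.-1 * block_step i.
Proof.
case: i => // i _; rewrite (@block_walk_split i i.+1) // /block_step.
have [lt_it|[mid|ge_i]] : (i < t \/ t <= i < t + l \/ t + l <= i)%N by lia.
- have -> : (minn i.+1 t - minn i t = 1)%N by lia.
  have -> : (minn (i.+1 - t) l - minn (i - t) l = 0)%N by lia.
  have -> : (i.+1 - t - l - (i - t - l) = 0)%N by lia.
  by rewrite expg1 !expg0 !mulg1 ifF //; lia.
- have -> : (minn i.+1 t - minn i t = 0)%N by lia.
  have -> : (minn (i.+1 - t) l - minn (i - t) l = 1)%N by lia.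
  have -> : (i.+1 - t - l - (i - t - l) = 0)%N by lia.
  by rewrite expg1 !expg0 mulg1 mul1g ifT //; lia.
- have -> : (minn i.+1 t - minn i t = 0)%N by lia.
  have -> : (minn (i.+1 - t) l - minn (i - t) l = 0)%N by lia.
  have -> : (i.+1 - t - l - (i - t - l) = 1)%N by lia.
  by rewrite expg1 !expg0 !mul1g ifF //; lia.
Qed.

Lemma block_walk_neq : short_relation_free a b t ->
  forall i j, (i < j <= i + t)%N -> block_walk i != block_walk j.
Proof.
move=> free i j /andP[lt_ij le_jit]; rewrite (@block_walk_split i j (ltnW lt_ij)).
apply/eqP; rewrite -{1}[block_walk i]mulg1 => /mulgI/esym; rewrite -mulgA.
by move=> /mulg_eq1C; rewrite -mulgA -expgD; apply/eqP/free; lia.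
Qed.

Lemma nth_block_seq m i : (i < t + l + m)%N -> nth 1 (block_seq m) i = block_step i.+1.
Proof.
move=> i_lt; rewrite /block_seq /block_step !nth_cat !size_nseq !nth_nseq.
by do !case: ifP => //; lia.
Qed.

Lemma perm_block_seq m : perm_eq (block_seq m) (mset2 a b (t + m) l).
Proof. by rewrite /block_seq /mset2 perm_catCA -nseqD perm_catC. Qed.

End BlockWalk.

Theorem proposition3p2 (gT : finGroupType) (t : nat) (a1 a2 : gT) (l1 l2 : nat) :
  0 < t ->
  (t * (2 * t + 1) < pdiv #|[set: gT]|)%N ->
  a1 != 1 -> a2 != 1 ->
  (2 * t <= l1)%N ->
  exists w : nat -> gT,
    realization (mset2 a1 a2 l1 l2) w /\
    (forall i, (1 <= i <= t)%N -> w i = w i.-1 * a1) /\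
    (forall i, (l1 + l2 - (t - 1) <= i <= l1 + l2)%N -> w i = w i.-1 * a1) /\
    (forall i j, (i < j)%N -> (j <= i + t)%N -> (j <= l1 + l2)%N ->
       w i != w j).
Proof.
move=> t_gt0 t_lt_p a1_neq1 a2_neq1 le_2t_l1.
have tt_lt_p : (t * t < pdiv #|[set: gT]|)%N.
  by apply: leq_ltn_trans t_lt_p; rewrite leq_mul2l; lia.
have small_order (x : gT) k : x != 1 -> (0 < k <= t * t)%N -> x ^+ k != 1.
  move=> x_neq1 /andP[k_gt0 k_le]; apply: (expg_neq1_lt_pdiv (in_setT x)) => //.
  by rewrite k_gt0; exact: leq_ltn_trans k_le tt_lt_p.
have [b b_a2 free] : exists2 b, b = a2 \/ b = a2^-1 & short_relation_free a1 b t.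
  by apply: exists_sign_short_relation_free => k k_small; apply: small_order => //; nia.
have a1_step i : (i <= t \/ t + l2 < i)%N -> block_step a1 b t l2 i = a1.
  by move=> i_out; rewrite /block_step ifF //; lia.
exists (block_walk a1 b t l2); split; last split; last split.
- apply: (@realization_of_steps _ _ (block_seq a1 a2 t l2 (l1 - t))).
    by rewrite [in mset2 _ _ l1](_ : l1 = t + (l1 - t))%N ?perm_block_seq //; lia.
  move=> i /andP[i_gt0 i_le].
  have i_lt : (i.-1 < t + l2 + (l1 - t))%N by move: i_le; rewrite size_cat !size_nseq; lia.
  rewrite block_walk_step // nth_block_seq // prednK //.
  by rewrite /block_step; case: ifP => _; [case: b_a2 => ->; [left | right] | left].
- by move=> i /andP[i_gt0 i_le]; rewrite block_walk_step ?a1_step //; lia.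
- by move=> i /andP[i_ge i_le]; rewrite block_walk_step ?a1_step //; lia.
- by move=> i j lt_ij le_jit _; apply: block_walk_neq => //; lia.
Qed.
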